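(* Let $V$ be a toroidal vertex algebra, let $K_Y(V)=\{v\in V\mid Y(v;x_0,\mathbf{x})=0\}$ (an ideal of $V$) and $\overline{V}=V/K_Y(V)$, the quotient toroidal vertex algebra. Then $\overline{V}$ is a simple toroidal vertex algebra if and only if $V^0$ is a simple toroidal vertex algebra.
   Context: Fix a positive integer $r$. Write $\mathbf{x}=(x_1,\dots,x_r)$, $\mathbf{x}^{\mathbf{m}}=x_1^{m_1}\cdots x_r^{m_r}$ (similarly for other variables), $\mathbf{z}\mathbf{y}=(z_1y_1,\dots,z_ry_r)$. For a vector space $W$ put $\mathcal{E}(W,r)=\mathrm{Hom}(W,W[[x_1^{\pm1},\dots,x_r^{\pm1}]]((x_0)))$. A toroidal vertex algebra is a vector space $V$ with a linear map $Y(\cdot;x_0,\mathbf{x}):V\to\mathcal{E}(V,r)$, $v\mapsto\sum_{(m_0,\mathbf{m})\in\mathbb{Z}\times\mathbb{Z}^r}v_{m_0,\mathbf{m}}x_0^{-m_0-1}\mathbf{x}^{-\mathbf{m}}$, and a vector $\mathbf{1}$ with $Y(\mathbf{1};x_0,\mathbf{x})v=v$, $Y(v;x_0,\mathbf{x})\mathbf{1}\in V[[x_0,x_1^{\pm1},\dots,x_r^{\pm1}]]$, and the Jacobi identity $$z_0^{-1}\delta\!\left(\tfrac{x_0-y_0}{z_0}\right)Y(u;x_0,\mathbf{z}\mathbf{y})Y(v;y_0,\mathbf{y})-z_0^{-1}\delta\!\left(\tfrac{y_0-x_0}{-z_0}\right)Y(v;y_0,\mathbf{y})Y(u;x_0,\mathbf{z}\mathbf{y})=y_0^{-1}\delta\!\left(\tfrac{x_0-z_0}{y_0}\right)Y(Y(u;z_0,\mathbf{z})v;y_0,\mathbf{y})$$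 for all $u,v$, where $Y(u;x_0,\mathbf{z}\mathbf{y})=\sum u_{m_0,\mathbf{m}}x_0^{-m_0-1}\mathbf{z}^{-\mathbf{m}}\mathbf{y}^{-\mathbf{m}}$. An ideal is a subspace $I$ with $u_{m_0,\mathbf{m}}v\in I$ whenever $u\in I$ or $v\in I$; a toroidal vertex algebra is simple if its only ideals are $0$ and itself. $V^0=\mathrm{span}\{v_{m_0,\mathbf{m}}\mathbf{1}\mid v\in V,(m_0,\mathbf{m})\in\mathbb{Z}\times\mathbb{Z}^r\}$ is a toroidal vertex subalgebra of $V$. *)

From HB Require Import structures.
From mathcomp Require Import all_boot all_order all_algebra.
Set Implicit Arguments. Unset Strict Implicit. Unset Printing Implicit Defensive.
Import Order.TTheory GRing.Theory Num.Theory.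
Local Open Scope ring_scope.

(* A "mode map" mode u m0 m v stands for
   u_{m0,m} v, i.e. Y(u;x0,x) = sum u_{m0,m} x0^{-m0-1} x^{-m}. *)

Definition modes (V : Type) (r : nat) := V -> int -> 'rV[int]_r -> V -> V.

Definition binz (l : int) (i : nat) : int :=
  match l with
  | Posz n => ('C(n, i))%:Z
  | Negz k => (-1) ^+ i * ('C(k + i, i))%:Z
  end.

(* Toroidal vertex algebra axioms, the Jacobi identity being written out
   coefficientwise (coefficient of z0^{-l-1} x0^{-m0-1} y0^{-n0-1}
   z^{-m} y^{-p} applied to w); both sides are finite sums by truncation,
   so we require equality of all sufficiently long partial sums. *)
Definition is_tva (F : fieldType) (V : lmodType F) (r : nat)
    (mode : modes V r) (one : V) : Prop :=
      (forall m0 m w (a : F) u1 u2,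
         mode (a *: u1 + u2) m0 m w = a *: mode u1 m0 m w + mode u2 m0 m w) /\
      (forall u m0 m (a : F) w1 w2,
         mode u m0 m (a *: w1 + w2) = a *: mode u m0 m w1 + mode u m0 m w2) /\
      (* Y(u;x0,x)v lies in V[[x^{+-1}]]((x0)) *)
      (forall u v, exists N : int, forall m0 m, N <= m0 -> mode u m0 m v = 0) /\
      (forall v m0 m, mode one m0 m v = if (m0 == -1) && (m == 0) then v else 0) /\
    (* Y(v;x0,x)1 lies in V[[x0, x^{+-1}]] *)
    (forall v m0 m, 0 <= m0 -> mode v m0 m one = 0) /\
    (forall u v w (l m0 n0 : int) (m p : 'rV[int]_r),
       exists N : nat, forall M : nat, (N <= M)%N ->
         \sum_(i < M) (binz m0 i)%:~R *:
            mode (mode u (l + (i : nat)%:Z) m v) (m0 + n0 - (i : nat)%:Z) p w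
         = \sum_(i < M) ((-1) ^+ i * (binz l i)%:~R) *:
            (mode u (m0 + l - (i : nat)%:Z) m (mode v (n0 + (i : nat)%:Z) (p - m) w)
             - (-1) ^ l *:
               mode v (n0 + l - (i : nat)%:Z) (p - m) (mode u (m0 + (i : nat)%:Z) m w))).

Definition is_subspace (F : fieldType) (V : lmodType F) (S : V -> Prop) : Prop :=
  S 0 /\ forall (a : F) u v, S u -> S v -> S (a *: u + v).

(* ideals of the subalgebra with carrier S (a subspace closed under the
   modes); for S = everything, these are the ideals of the algebra itself *)
Definition is_ideal_in (F : fieldType) (V : lmodType F) (r : nat)
    (S : V -> Prop) (mode : modes V r) (I : V -> Prop) : Prop :=
  [/\ is_subspace I, (forall v, I v -> S v) &
      forall u v m0 m, S u -> S v -> (I u \/ I v) -> I (mode u m0 m v)].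

Definition simple_in (F : fieldType) (V : lmodType F) (r : nat)
    (S : V -> Prop) (mode : modes V r) : Prop :=
  forall I, is_ideal_in S mode I ->
    (forall v, I v -> v = 0) \/ (forall v, S v -> I v).

Definition simple_tva (F : fieldType) (V : lmodType F) (r : nat)
    (mode : modes V r) : Prop := simple_in (fun _ => True) mode.

Definition KY (F : fieldType) (V : lmodType F) (r : nat) (mode : modes V r)
    (v : V) : Prop := forall m0 m w, mode v m0 m w = 0.

(* V^0 = span { v_{m0,m} 1 } : smallest subspace containing all v_{m0,m} 1 *)
Definition V0 (F : fieldType) (V : lmodType F) (r : nat) (mode : modes V r)
    (one : V) (x : V) : Prop :=
  forall S : V -> Prop, is_subspace S ->
    (forall v m0 m, S (mode v m0 m one)) -> S x.

From HB Require Import structures.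
From mathcomp Require Import all_boot all_order all_algebra.
From mathcomp Require Import zify.
Import Order.TTheory GRing.Theory Num.Theory.
Local Open Scope ring_scope.
Set Implicit Arguments. Unset Strict Implicit.

(* Two consequences of the Jacobi identity against the vacuum drive everything:
   (u_{a,b} v)_{-1,q} 1 = u_{a,b} (v_{-1,q-b} 1) and (u_{-1,m} 1)_{m0,m} = u_{m0,m}.
   The first shows that on V^0 the component x_{-1,p} 1 is the part of x of
   multi-degree p, so x = sum_p x_{-1,p} 1; hence V^0 meets K_Y(V) = ker pi
   trivially.  An ideal I of V^0 then induces the ideal
   pi {v | v_{-1,b} 1 in I for all b} of Vbar, and an ideal J of Vbar the ideal
   V^0 ∩ pi^-1 J of V^0; these exchange zero and full ideals, because the
   vacuum lies in V^0 and generates every ideal containing it. *)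

Lemma binz0 (l : int) : binz l 0 = 1.
Proof. by case: l => n /=; rewrite bin0 // mulr1. Qed.

Section ToroidalVertexAlgebra.

Variables (F : fieldType) (V : lmodType F) (r : nat) (mode : modes V r) (one : V).
Hypothesis hV : is_tva mode one.

Lemma mode0l m0 m w : mode 0 m0 m w = 0.
Proof.
have [linl _] := hV; have := linl m0 m w 1 0 0; rewrite !scale1r addr0 => h.
by apply: (addrI (mode 0 m0 m w)); rewrite addr0 -h.
Qed.

Lemma mode0r u m0 m : mode u m0 m 0 = 0.
Proof.
have [_ [linr _]] := hV; have := linr u m0 m 1 0 0; rewrite !scale1r addr0 => h.
by apply: (addrI (mode u m0 m 0)); rewrite addr0 -h.
Qed.

Lemma mode_one x : mode one (-1) 0 x = x.
Proof. by have [_ [_ [_ [oneax _]]]] := hV; rewrite oneax !eqxx. Qed.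

(* Jacobi with w = 1, l = a, m0 = 0, n0 = -1: by the creation property every
   term with i > 0 vanishes. *)
Lemma mode_modeN1_one u v a b q :
  mode u a b (mode v (-1) q one) = mode (mode u a b v) (-1) (q + b) one.
Proof.
have [_ [_ [_ [_ [vac jac]]]]] := hV.
have [N HN] := jac u v one a 0 (-1) b (q + b).
have := HN N.+1 (leqnSn N); rewrite !big_ord_recl.
rewrite big1; last by move=> i _; rewrite lift0 /= scale0r.
rewrite big1; last first.
  move=> i _; rewrite lift0 [mode u (0 + _) b one]vac ?[mode v (-1 + _) _ one]vac;
    try lia.
  by rewrite !mode0r scaler0 subr0 scaler0.
rewrite /= !binz0 mul1r scale1r !addr0 !sub0r add0r addrK.
by rewrite [mode u 0 b one]vac // mode0r scaler0 subr0 scale1r => ->.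
Qed.

(* Jacobi with v = 1, l = -1, n0 = 0, p = m: only the i = 0 terms survive. *)
Lemma mode_creation u m0 m w : mode (mode u (-1) m one) m0 m w = mode u m0 m w.
Proof.
have [_ [_ [_ [oneax [vac jac]]]]] := hV.
have [N HN] := jac u one w (-1) m0 0 m m.
have := HN N.+1 (leqnSn N); rewrite !big_ord_recl.
rewrite big1; last by move=> i _; rewrite lift0 vac ?mode0l ?scaler0 //; lia.
rewrite big1; last first.
  move=> i _; rewrite lift0 !oneax.
  have -> : (0 + (i.+1)%:Z == -1) = false by apply/eqP; lia.
  have -> : (0 + -1 - (i.+1)%:Z == -1) = false by apply/eqP; lia.
  by rewrite /= mode0r scaler0 subr0 scaler0.
rewrite /= expr0 mul1r bin0 scale1r !addr0 !oneax subrr eqxx.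
have -> : ((0 : int) == -1) = false by [].
by rewrite /= mode0r sub0r eqxx binz0 scale1r exprN1 invrN1 scaleN1r opprK.
Qed.

Lemma modeN1_mode_one u a b p :
  mode (mode u a b one) (-1) p one = if p == b then mode u a b one else 0.
Proof.
have := mode_modeN1_one u one a b (p - b); rewrite subrK => <-.
have [_ [_ [_ [oneax _]]]] := hV.
by rewrite oneax subr_eq0 eqxx; case: eqP; rewrite ?mode0r.
Qed.

Lemma V0_subspace : is_subspace (V0 mode one).
Proof.
split=> [S [S0 _] _ // | a u v hu hv S hS hgen].
by case: (hS) => _; apply; [exact: hu hS hgen | exact: hv hS hgen].
Qed.

Lemma V0_mode_one v m0 m : V0 mode one (mode v m0 m one).
Proof. by move=> S _; apply. Qed.

Lemma V0_one : V0 mode one one.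
Proof. by have := V0_mode_one one (-1) 0; rewrite mode_one. Qed.

Lemma V0_modeR x u a b : V0 mode one x -> V0 mode one (mode u a b x).
Proof.
move=> hx; move: u a b.
apply: (hx (fun x => forall u a b, V0 mode one (mode u a b x))).
  split=> [u a b | c y z hy hz u a b]; first by rewrite mode0r; case: V0_subspace.
  have [_ [linr _]] := hV; rewrite linr.
  by case: V0_subspace => _; apply.
move=> g n q u a b; have := modeN1_mode_one g n q q; rewrite eqxx => <-.
by rewrite mode_modeN1_one; apply: V0_mode_one.
Qed.

(* The witness s is the finite set of multi-degrees in which x lives. *)
Lemma V0_sum_components x : V0 mode one x ->
  exists s : seq 'rV[int]_r, x = \sum_(p <- undup s) mode x (-1) p one.
Proof.
move=> hx.
pose S x := exists s : seq 'rV[int]_r, forall t, uniq t -> {subset s <= t} ->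
  x = \sum_(p <- t) mode x (-1) p one.
suff [s hs] : S x by exists s; apply: hs => [|p]; rewrite ?undup_uniq ?mem_undup.
apply: hx.
  split=> [|c y z [s hs] [s' hs']].
    by exists [::] => t _ _; rewrite big1 // => p _; rewrite mode0l.
  exists (s ++ s') => t ut st.
  rewrite {1}(hs t ut) => [|p ps]; last by apply: st; rewrite mem_cat ps.
  rewrite {1}(hs' t ut) => [|p ps]; last by apply: st; rewrite mem_cat ps orbT.
  rewrite scaler_sumr -big_split /=; apply: eq_bigr => p _.
  by have [linl _] := hV; rewrite linl.
move=> v m0 m; exists [:: m] => t ut st.
rewrite (bigD1_seq m) ?st ?mem_head //= modeN1_mode_one eqxx big1 ?addr0 //.
by move=> p hp; rewrite modeN1_mode_one (negbTE hp).
Qed.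

Lemma V0_KY_eq0 x : V0 mode one x -> KY mode x -> x = 0.
Proof.
move=> hx hK; have [s ->] := V0_sum_components hx.
by rewrite big1 // => p _; apply: hK.
Qed.

End ToroidalVertexAlgebra.

Section Quotient.

Variables (F : fieldType) (r : nat) (V : lmodType F) (mode : modes V r) (one : V).
Hypothesis hV : is_tva mode one.
Variables (W : lmodType F) (modeW : modes W r) (oneW : W).
Hypothesis hW : is_tva modeW oneW.
Variable pi : {linear V -> W}.
Hypothesis pi_surj : forall w : W, exists v : V, pi v = w.
Hypothesis pi_ker : forall v : V, pi v = 0 <-> KY mode v.
Hypothesis pi_mode : forall u v m0 m, pi (mode u m0 m v) = modeW (pi u) m0 m (pi v).
Hypothesis pi_one : pi one = oneW.

Section IdealOfV0.

Variable I : V -> Prop.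
Hypothesis hI : is_ideal_in (V0 mode one) mode I.

Definition components_in v := forall b, I (mode v (-1) b one).

Lemma components_in_subspace : is_subspace components_in.
Proof.
have [[I0 IP] _ _] := hI.
split=> [b | c x y hx hy b]; first by rewrite (mode0l hV).
by have [linl _] := hV; rewrite linl; apply: IP.
Qed.

Lemma components_in_pi u v : components_in v -> pi u = pi v -> components_in u.
Proof.
move=> hv e; have hK : KY mode (u - v) by apply/pi_ker; rewrite linearB e subrr.
have hKv : components_in (u - v).
  by move=> b; rewrite hK; case: hI => [[]].
by have := components_in_subspace.2 1 _ _ hKv hv; rewrite scale1r subrK.
Qed.

Definition image_ideal w := exists v, components_in v /\ pi v = w.

(* (u_{m0,m} v)_{-1,b} 1 = (u_{-1,m} 1)_{m0,m} (v_{-1,b-m} 1), a mode of two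
   elements of V^0. *)
Lemma image_ideal_ideal : is_ideal_in (fun _ => True) modeW image_ideal.
Proof.
have [_ _ Imode] := hI.
split=> [||w1 w2 m0 m _ _ hw].
- split=> [|c _ _ [v1 [h1 <-]] [v2 [h2 <-]]].
    by exists 0; rewrite linear0; split => //; apply: components_in_subspace.1.
  by exists (c *: v1 + v2); rewrite linearP; split => //; apply: components_in_subspace.2.
- by [].
- have [u eu] := pi_surj w1; have [v ev] := pi_surj w2; rewrite -eu -ev in hw *.
  exists (mode u m0 m v); split; last by rewrite pi_mode.
  move=> b; rewrite -(subrK m b) -mode_modeN1_one // -(mode_creation hV u m0 m).
  apply: Imode; rewrite ?V0_mode_one //.
  case: hw => [[u' [hu' e]] | [v' [hv' e]]]; [left | right].
    exact: (components_in_pi hu' (esym e)).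
  exact: (components_in_pi hv' (esym e)).
Qed.

End IdealOfV0.

Lemma simple_V0_of_simple_quotient :
  simple_tva modeW -> simple_in (V0 mode one) mode.
Proof.
move=> simW I hI; have [_ IV0 Imode] := hI.
case: (simW _ (image_ideal_ideal hI)) => [J0 | Jall]; [left => x hx | right => x hx].
- apply: (V0_KY_eq0 hV (IV0 _ hx)); apply/pi_ker; apply: J0; exists x; split=> // b.
  by apply: Imode; [exact: IV0 | exact: V0_one | left].
- have [v [hv e]] := Jall oneW Logic.I.
  have := components_in_pi hI (u := one) hv; rewrite e pi_one => /(_ erefl 0).
  rewrite mode_one // -[x](mode_one hV) => hone.
  by apply: Imode; [exact: V0_one | exact: hx | left].
Qed.

Section IdealOfQuotient.

Variable J : W -> Prop.
Hypothesis hJ : is_ideal_in (fun _ => True) modeW J.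

Definition preimage_ideal v := V0 mode one v /\ J (pi v).

Lemma preimage_ideal_ideal : is_ideal_in (V0 mode one) mode preimage_ideal.
Proof.
have [[J0 JP] _ Jmode] := hJ; have [V00 V0P] := V0_subspace mode one.
split=> [||u v m0 m hu hv huv].
- split=> [|c x y [hx1 hx2] [hy1 hy2]]; first by rewrite /preimage_ideal linear0.
  by split; [apply: V0P | rewrite linearP; apply: JP].
- by move=> v [].
- split; first exact: V0_modeR.
  by rewrite pi_mode; apply: Jmode => //; case: huv => [[_ h] | [_ h]]; [left | right].
Qed.

End IdealOfQuotient.

Lemma simple_quotient_of_simple_V0 :
  simple_in (V0 mode one) mode -> simple_tva modeW.
Proof.
move=> simV J hJ; have [_ _ Jmode] := hJ.
case: (simV _ (preimage_ideal_ideal hJ)) => [I0 | Iall]; [left => w hw | right => w _].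
- have [u ?] := pi_surj w; subst w; apply/pi_ker => m0 m x.
  rewrite -(mode_creation hV) (I0 (mode u (-1) m one)) ?(mode0l hV) //.
  by split; rewrite ?V0_mode_one // pi_mode pi_one; apply: Jmode => //; left.
- have [_] := Iall one (V0_one hV); rewrite pi_one => hJone.
  by rewrite -[w](mode_one hW); apply: Jmode => //; left.
Qed.

End Quotient.

Unset Implicit Arguments. Set Strict Implicit.

Theorem proposition2p23 (F : fieldType) (hF : [pchar F] =i pred0) (r : nat)
    (V : lmodType F) (mode : modes V r) (one : V) (hV : is_tva mode one)
    (W : lmodType F) (modeW : modes W r) (oneW : W) (hW : is_tva modeW oneW)
    (pi : {linear V -> W})
    (pi_surj : forall w : W, exists v : V, pi v = w)
    (pi_ker : forall v : V, pi v = 0 <-> KY mode v)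
    (pi_mode : forall u v m0 m, pi (mode u m0 m v) = modeW (pi u) m0 m (pi v))
    (pi_one : pi one = oneW) :
  simple_tva modeW <-> simple_in (V0 mode one) mode.
Proof.
split.
- exact: (simple_V0_of_simple_quotient hV pi_surj pi_ker pi_mode pi_one).
- exact: (simple_quotient_of_simple_V0 hV hW pi_surj pi_ker pi_mode pi_one).
Qed.
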